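(* Let $X$ and $Y$ be compact Hausdorff spaces, and let $E\subseteq C(X)$ and $F\subseteq C(Y)$ be Riesz subspaces, dense for the supremum norm, containing the respective constant functions. Let $G_1,G_2$ be Archimedean Riesz spaces and $\phi_i:E\times F\to G_i$ ($i=1,2$) be bi-injective Riesz bimorphisms. For $i=1,2$ let $E\overline{\otimes}_{\phi_i}F$ denote the Riesz subspace of $G_i$ generated by $\phi_i(E\times F)$. Then there is a unique Riesz isomorphism $T:E\overline{\otimes}_{\phi_1}F\to E\overline{\otimes}_{\phi_2}F$ such that $T\circ\phi_1=\phi_2$.
   Context: A linear map $T$ between Riesz spaces is a Riesz homomorphism if $T(x\vee y)=Tx\vee Ty$; a Riesz isomorphism is a bijective Riesz homomorphism. A bilinear map $\phi:E\times F\to G$ is a Riesz bimorphism if $\phi(\cdot,y)$ is a Riesz homomorphism for every $y\in F_+$ and $\phi(x,\cdot)$ is a Riesz homomorphism for every $x\in E_+$. $\phi$ is bi-injective if $\phi(x,y)=0$ implies $x=0$ or $y=0$. *)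

From HB Require Import structures.
From mathcomp Require Import all_boot all_order all_algebra.
From mathcomp Require Import all_classical all_reals topology normedtype.
Set Implicit Arguments. Unset Strict Implicit. Unset Printing Implicit Defensive.
Import Order.TTheory GRing.Theory Num.Theory numFieldNormedType.Exports.
Local Open Scope ring_scope.
Local Open Scope classical_set_scope.

Definition riesz_space (R : realType) (G : lmodType R)
    (le : G -> G -> Prop) (join : G -> G -> G) : Prop :=
  (forall x, le x x) /\
  (forall x y, le x y -> le y x -> x = y) /\
  (forall x y z, le x y -> le y z -> le x z) /\
  (forall x y z, le x y -> le (x + z) (y + z)) /\
  (forall (a : R) x y, 0 <= a -> le x y -> le (a *: x) (a *: y)) /\
  (forall x y, [/\ le x (join x y), le y (join x y)
                     & forall z, le x z -> le y z -> le (join x y) z]).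

Definition archimedean_riesz_space (R : realType) (G : lmodType R)
    (le : G -> G -> Prop) (join : G -> G -> G) : Prop :=
  riesz_space le join /\
  forall x y : G, le 0 x -> (forall n : nat, le (n%:R *: x) y) -> x = 0.

Definition riesz_subspace (R : realType) (G : lmodType R)
    (join : G -> G -> G) (V : set G) : Prop :=
  [/\ V 0, (forall x y, V x -> V y -> V (x + y)),
      (forall (a : R) x, V x -> V (a *: x))
    & (forall x y, V x -> V y -> V (join x y))].

Definition riesz_span (R : realType) (G : lmodType R)
    (join : G -> G -> G) (S : set G) : set G :=
  fun g => forall V, riesz_subspace join V -> S `<=` V -> V g.

Definition riesz_subspace_CX (R : realType) (X : topologicalType)
    (E : set (X -> R)) : Prop :=
  [/\ (forall f, E f -> continuous f),
      E (fun _ => 0),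
      (forall f g, E f -> E g -> E (fun x => f x + g x)),
      (forall (a : R) f, E f -> E (fun x => a * f x))
    & (forall f g, E f -> E g -> E (fun x => Num.max (f x) (g x)))].

Definition sup_dense (R : realType) (X : topologicalType) (E : set (X -> R)) : Prop :=
  forall f : X -> R, continuous f -> forall eps : R, 0 < eps ->
    exists2 g, E g & forall x, `|f x - g x| < eps.

Definition contains_constants (R : realType) (X : topologicalType)
    (E : set (X -> R)) : Prop := forall c : R, E (fun _ => c).

Definition riesz_hom_on (R : realType) (G H : lmodType R)
    (joinG : G -> G -> G) (joinH : H -> H -> H) (V : set G) (T : G -> H) : Prop :=
  (forall (a b : R) x y, V x -> V y -> T (a *: x + b *: y) = a *: T x + b *: T y) /\
  (forall x y, V x -> V y -> T (joinG x y) = joinH (T x) (T y)).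

Definition riesz_bimorphism (R : realType) (X Y : topologicalType)
    (E : set (X -> R)) (F : set (Y -> R)) (G : lmodType R)
    (join : G -> G -> G) (phi : (X -> R) -> (Y -> R) -> G) : Prop :=
  (forall y, F y -> forall (a b : R) f g, E f -> E g ->
      phi (fun t => a * f t + b * g t) y = a *: phi f y + b *: phi g y) /\
  (forall x, E x -> forall (a b : R) f g, F f -> F g ->
      phi x (fun t => a * f t + b * g t) = a *: phi x f + b *: phi x g) /\
  (forall y, F y -> (forall t, 0 <= y t) -> forall f g, E f -> E g ->
      phi (fun t => Num.max (f t) (g t)) y = join (phi f y) (phi g y)) /\
  (forall x, E x -> (forall t, 0 <= x t) -> forall f g, F f -> F g ->
      phi x (fun t => Num.max (f t) (g t)) = join (phi x f) (phi x g)).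

Definition bi_injective (R : realType) (X Y : topologicalType)
    (E : set (X -> R)) (F : set (Y -> R)) (G : lmodType R)
    (phi : (X -> R) -> (Y -> R) -> G) : Prop :=
  forall f g, E f -> F g -> phi f g = 0 -> f = (fun _ => 0) \/ g = (fun _ => 0).

Definition riesz_tensor (R : realType) (X Y : topologicalType)
    (E : set (X -> R)) (F : set (Y -> R)) (G : lmodType R)
    (join : G -> G -> G) (phi : (X -> R) -> (Y -> R) -> G) : set G :=
  riesz_span join [set phi f g | f in E & g in F].

Definition riesz_iso_onto (R : realType) (G H : lmodType R)
    (joinG : G -> G -> G) (joinH : H -> H -> H) (V : set G) (W : set H)
    (T : G -> H) : Prop :=
  [/\ riesz_hom_on joinG joinH V T, (forall x, V x -> W (T x)),
      (forall x y, V x -> V y -> T x = T y -> x = y)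
    & (forall z, W z -> exists2 x, V x & T x = z)].

(* Every element of the Riesz subspace generated by phi(E x F) is the value
   [reval join phi t] of a formal lattice-linear expression [t] in generators
   phi(f, g). Reading [t] in C(X x Y), with phi(f, g) replaced by f(x) g(y), gives
   a continuous function [rfun t], and the heart of the proof is that
   [rfun t >= 0] implies [reval join phi t >= 0] (compactness of X and the
   Archimedean property), while [reval join phi t = 0] implies [rfun t = 0]
   (bi-injectivity and bump functions). Hence [reval join phi s = reval join phi t]
   iff [rfun s = rfun t], a condition that does not depend on phi, and
   T (reval join1 phi1 t) := reval join2 phi2 t is the required isomorphism. *)

From HB Require Import structures.
From mathcomp Require Import all_boot all_order all_algebra.
From mathcomp Require Import all_classical all_reals topology normedtype.
From mathcomp Require Import lra.
Import Order.TTheory GRing.Theory Num.Theory numFieldNormedType.Exports.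
Set Implicit Arguments. Unset Strict Implicit. Unset Printing Implicit Defensive.
Local Open Scope ring_scope.
Local Open Scope classical_set_scope.

Section RieszSpaceTheory.
Variables (R : realType) (G : lmodType R) (le : G -> G -> Prop) (join : G -> G -> G).
Hypothesis hG : riesz_space le join.

Lemma rlexx x : le x x.
Proof. by case: hG => + _; apply. Qed.
Lemma rle_anti x y : le x y -> le y x -> x = y.
Proof. by case: hG => _ [+ _]; apply. Qed.
Lemma rle_trans x y z : le x y -> le y z -> le x z.
Proof. by case: hG => _ [_ [+ _]]; apply. Qed.
Lemma rlerD2r z x y : le x y -> le (x + z) (y + z).
Proof. by case: hG => _ [_ [_ [+ _]]]; apply. Qed.
Lemma rlerZ (a : R) x y : 0 <= a -> le x y -> le (a *: x) (a *: y).
Proof. by case: hG => _ [_ [_ [_ [+ _]]]]; apply. Qed.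
Lemma rle_joinl x y : le x (join x y).
Proof. by case: hG => _ [_ [_ [_ [_ /(_ x y) []]]]]. Qed.
Lemma rle_joinr x y : le y (join x y).
Proof. by case: hG => _ [_ [_ [_ [_ /(_ x y) []]]]]. Qed.
Lemma rjoin_le x y z : le x z -> le y z -> le (join x y) z.
Proof. by case: hG => _ [_ [_ [_ [_ /(_ x y) [_ _]]]]]; apply. Qed.

Lemma rlerD2l z x y : le x y -> le (z + x) (z + y).
Proof. by rewrite ![z + _]addrC; apply: rlerD2r. Qed.

Lemma rlerD x y z w : le x y -> le z w -> le (x + z) (y + w).
Proof. by move=> /(rlerD2r z) xy /(rlerD2l y); apply: rle_trans. Qed.

Lemma rlerBlDl x y z : le (x - y) z <-> le x (y + z).
Proof.
split=> [/(rlerD2l y)|/(rlerD2l (- y))]; first by rewrite addrC subrK.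
by rewrite addKr addrC.
Qed.

Lemma rsubr_ge0 x y : le 0 (y - x) <-> le x y.
Proof.
by split=> [/(rlerD2r x)|/(rlerD2r (- x))]; rewrite ?add0r ?subrK ?subrr.
Qed.

Lemma rlerN2 x y : le x y -> le (- y) (- x).
Proof. by move=> /rsubr_ge0 xy; apply/rsubr_ge0; rewrite opprK addrC. Qed.

Lemma rscaler_ge0 (a : R) x : 0 <= a -> le 0 x -> le 0 (a *: x).
Proof. by move=> a0 /(rlerZ a0); rewrite scaler0. Qed.

Lemma rjoinxx x : join x x = x.
Proof. by apply: rle_anti; [apply: rjoin_le; apply: rlexx | apply: rle_joinl]. Qed.

Lemma rjoinB_le a1 a2 b1 b2 c1 c2 : le 0 c1 -> le 0 c2 ->
  le (a1 - b1) c1 -> le (a2 - b2) c2 -> le (join a1 a2 - join b1 b2) (c1 + c2).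
Proof.
move=> c1_ge0 c2_ge0 /rlerBlDl h1 /rlerBlDl h2; apply/rlerBlDl; apply: rjoin_le.
  apply: rle_trans h1 (rlerD (rle_joinl _ _) _).
  by have := rlerD2l c1 c2_ge0; rewrite addr0.
apply: rle_trans h2 (rlerD (rle_joinr _ _) _).
by have := rlerD2r c2 c1_ge0; rewrite add0r.
Qed.

Hypothesis harch : forall x y : G, le 0 x -> (forall n : nat, le (n%:R *: x) y) -> x = 0.

(* With [w := join (- u) 0], the hypothesis gives [n w <= y] for every [n]. *)
Lemma rarchimedean_ge0 u y :
  le 0 y -> (forall e : R, 0 < e -> le (- (e *: y)) u) -> le 0 u.
Proof.
move=> y0 hu; have w0 : join (- u) 0 = 0.
  apply: (harch (y := y) (rle_joinr _ _)) => -[|n]; first by rewrite scale0r.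
  have ni : (0 : R) < n.+1%:R^-1 by rewrite invr_gt0 ltr0n.
  have w_le : le (join (- u) 0) (n.+1%:R^-1 *: y).
    apply: rjoin_le; last exact: rscaler_ge0 (ltW ni) y0.
    by have := rlerN2 (hu _ ni); rewrite opprK.
  have := rlerZ (ler0n _ n.+1) w_le.
  by rewrite scalerA mulfV ?pnatr_eq0 // scale1r.
by have := rlerN2 (rle_joinl (- u) 0); rewrite w0 opprK oppr0.
Qed.

End RieszSpaceTheory.

Section RieszSubspaceCX.
Variables (R : realType) (T : topologicalType) (E : set (T -> R)).
Hypothesis hE : riesz_subspace_CX E.

Lemma cx_cont f : E f -> continuous f.
Proof. by case: hE => + _ _ _ _; apply. Qed.
Lemma cx0 : E (fun _ => 0).
Proof. by case: hE. Qed.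
Lemma cxD f g : E f -> E g -> E (fun x => f x + g x).
Proof. by case: hE => _ _ + _ _; apply. Qed.
Lemma cxZ (a : R) f : E f -> E (fun x => a * f x).
Proof. by case: hE => _ _ _ + _; apply. Qed.
Lemma cx_max f g : E f -> E g -> E (fun x => Num.max (f x) (g x)).
Proof. by case: hE => _ _ _ _; apply. Qed.

Lemma cxN f : E f -> E (fun x => - f x).
Proof. by move=> /(cxZ (-1)); under eq_fun do rewrite mulN1r. Qed.
Lemma cxB f g : E f -> E g -> E (fun x => f x - g x).
Proof. by move=> Ef /cxN; apply: cxD. Qed.
Lemma cx_norm f : E f -> E (fun x => `|f x|).
Proof. by move=> Ef; under eq_fun do rewrite -maxrN; apply: cx_max (cxN _). Qed.

Hypotheses (hEc : contains_constants E) (hEd : sup_dense E).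
Hypotheses (hT : compact [set: T]) (hTs : hausdorff_space T).

(* Urysohn separates [x0] from the complement of the interior of [U]; an element
   of [E] that is [1/4]-close to the Urysohn function is then truncated. *)
Lemma cx_bump x0 U : nbhs x0 U ->
  exists f, [/\ E f, forall x, 0 <= f x <= 1, f x0 != 0 & forall x, ~ U x -> f x = 0].
Proof.
move=> nU; set B := ~` interior U.
have cB : closed B := open_closedC (@open_interior _ U).
have dis : [set x0] `&` B = set0 by apply/seteqP; split=> x // [/= -> []].
have sep := proj1 (@normal_separatorP R T) (compact_normal hTs hT) _ _
  (@accessible_closed_set1 T (@hausdorff_accessible T hTs) x0) cB dis.
pose h := Urysohn (R := R) [set x0] B.
have h01 x : 0 <= h x <= 1.
  have := @Urysohn_range T R [set x0] B (h x) (ex_intro2 _ _ x I erefl).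
  by rewrite /= in_itv.
have hx0 : h x0 = 0 by apply: (Urysohn_sub0 sep); exists x0.
have hB x : B x -> h x = 1 by move=> Bx; apply: (Urysohn_sub1 sep); exists x.
have quarter_gt0 : (0 : R) < 1/4 by lra.
have hc : continuous h := @Urysohn_continuous T R _ _.
have [e Ee he] := hEd hc quarter_gt0.
exists (fun x => Num.max (3/4 - e x) 0); split.
- exact: cx_max (cxB (hEc _) Ee) cx0.
- move=> x; have := he x; have := h01 x; rewrite ltr_norml => /andP[? ?] /andP[? ?].
  by rewrite le_max lexx orbT ge_max ler01 andbT /=; lra.
- have := he x0; rewrite hx0 sub0r normrN ltr_norml => /andP[? ?].
  by rewrite gt_eqF // lt_max; apply/orP; left; lra.
move=> x nUx; have /hB hx : B x by move=> /interior_subset.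
have := he x; rewrite hx ltr_norml => /andP[? ?].
by apply/max_r; lra.
Qed.

End RieszSubspaceCX.

Inductive rterm (R X Y : Type) : Type :=
| RZero
| RGen of (X -> R) & (Y -> R)
| RAdd of rterm R X Y & rterm R X Y
| RScale of R & rterm R X Y
| RJoin of rterm R X Y & rterm R X Y.
Arguments RZero {R X Y}.

Section RieszTerms.
Variables (R : realType) (X Y : Type).
Implicit Types (t : rterm R X Y) (P : (X -> R) -> (Y -> R) -> Prop).

Fixpoint reval (G : lmodType R) (join : G -> G -> G)
    (phi : (X -> R) -> (Y -> R) -> G) t : G :=
  match t with
  | RZero => 0
  | RGen f g => phi f g
  | RAdd s u => reval join phi s + reval join phi u
  | RScale a s => a *: reval join phi s
  | RJoin s u => join (reval join phi s) (reval join phi u)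
  end.

Fixpoint rfun t (x : X) (y : Y) : R :=
  match t with
  | RZero => 0
  | RGen f g => f x * g y
  | RAdd s u => rfun s x y + rfun u x y
  | RScale a s => a * rfun s x y
  | RJoin s u => Num.max (rfun s x y) (rfun u x y)
  end.

Fixpoint rterm_all P t : Prop :=
  match t with
  | RZero => True
  | RGen f g => P f g
  | RAdd s u | RJoin s u => rterm_all P s /\ rterm_all P u
  | RScale _ s => rterm_all P s
  end.

Definition rterm_in (E : set (X -> R)) (F : set (Y -> R)) t :=
  rterm_all (fun f g => E f /\ F g) t.

Fixpoint lip_const t : R :=
  match t with
  | RZero => 0
  | RGen _ _ => 1
  | RAdd s u | RJoin s u => lip_const s + lip_const u
  | RScale a s => `|a| * lip_const s
  end.

Fixpoint gen_sum (Z : Type) (w : (X -> R) -> (Y -> R) -> Z -> R) t (z : Z) : R :=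
  match t with
  | RZero => 0
  | RGen f g => w f g z
  | RAdd s u | RJoin s u => gen_sum w s z + gen_sum w u z
  | RScale _ s => gen_sum w s z
  end.

Lemma rterm_all_impl P Q t :
  (forall f g, P f g -> Q f g) -> rterm_all P t -> rterm_all Q t.
Proof. by move=> PQ; elim: t => //= [s hs u hu|s hs u hu] []; split; auto. Qed.

Lemma rterm_all_and P Q t :
  rterm_all P t -> rterm_all Q t -> rterm_all (fun f g => P f g /\ Q f g) t.
Proof. by elim: t => //= [s hs u hu|s hs u hu] [? ?] [? ?]; split; auto. Qed.

Lemma lip_const_ge0 t : 0 <= lip_const t.
Proof. by elim: t => //= *; rewrite (addr_ge0, mulr_ge0). Qed.

Section GenSum.
Variables (Z : Type) (w : (X -> R) -> (Y -> R) -> Z -> R).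
Hypothesis w_ge0 : forall f g z, 0 <= w f g z.

Lemma gen_sum_ge0 t z : 0 <= gen_sum w t z.
Proof. by elim: t => //= *; rewrite addr_ge0. Qed.

Lemma gen_sum_ge_gen t : rterm_all (fun f g => forall z, w f g z <= gen_sum w t z) t.
Proof.
elim: t => //= [s hs u hu|s hs u hu]; split.
all: first [apply: rterm_all_impl hs | apply: rterm_all_impl hu] => f g le_w z.
all: by apply: le_trans (le_w z) _; rewrite (lerDl, lerDr) gen_sum_ge0.
Qed.
End GenSum.

Definition xosc t (x0 : X) : X -> R := gen_sum (fun f _ x => `|f x - f x0|) t.
Definition ybound t : Y -> R := gen_sum (fun _ g y => `|g y|) t.

Lemma xosc_ge0 t x0 x : 0 <= xosc t x0 x.
Proof. exact: gen_sum_ge0. Qed.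

Lemma ybound_ge0 t y : 0 <= ybound t y.
Proof. exact: gen_sum_ge0. Qed.

Lemma xosc_ge_gen t x0 : rterm_all (fun f _ => forall x, `|f x - f x0| <= xosc t x0 x) t.
Proof. exact: gen_sum_ge_gen. Qed.

Lemma ybound_ge_gen t : rterm_all (fun _ g => forall y, `|g y| <= ybound t y) t.
Proof. exact: gen_sum_ge_gen. Qed.

Lemma xosc_self t x0 : xosc t x0 x0 = 0.
Proof.
by rewrite /xosc; elim: t => //= [f g|s -> u ->|s -> u ->]; rewrite ?subrr ?normr0 ?addr0.
Qed.

Section Evaluation.
Variables (G : lmodType R) (le : G -> G -> Prop) (join : G -> G -> G).
Hypothesis hG : riesz_space le join.
Implicit Types (phi psi : (X -> R) -> (Y -> R) -> G).

Lemma reval_ext phi psi t :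
  rterm_all (fun f g => phi f g = psi f g) t -> reval join phi t = reval join psi t.
Proof.
elim: t => //= [s hs u hu|a s hs|s hs u hu].
- by case=> /hs-> /hu->.
- by move=> /hs->.
- by case=> /hs-> /hu->.
Qed.

Lemma reval0 t : reval join (fun _ _ => 0) t = 0.
Proof.
elim: t => //= [s -> u ->|a s ->|s -> u ->].
- by rewrite addr0.
- by rewrite scaler0.
- by rewrite (rjoinxx hG).
Qed.

Lemma reval_lipschitz phi psi d t : le 0 d ->
  rterm_all (fun f g => le (phi f g - psi f g) d /\ le (psi f g - phi f g) d) t ->
  le (reval join phi t - reval join psi t) (lip_const t *: d) /\
  le (reval join psi t - reval join phi t) (lip_const t *: d).
Proof.
move=> d0; have Kd0 s : le 0 (lip_const s *: d) := rscaler_ge0 hG (lip_const_ge0 s) d0.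
elim: t => /= [|f g|s hs u hu|a s hs|s hs u hu].
- by rewrite subrr scale0r; split; apply: (rlexx hG).
- by rewrite scale1r.
- by case=> /hs[? ?] /hu[? ?]; rewrite scalerDl; split; rewrite opprD addrACA; apply: (rlerD hG).
- move=> /hs[? ?]; rewrite -!scalerBr -scalerA.
  have [a0|a0] := leP 0 a; first by rewrite ger0_norm //; split; apply: (rlerZ hG).
  have e v : a *: v = (- a) *: (- v) by rewrite scaleNr scalerN opprK.
  by rewrite ltr0_norm // !e !opprB; split; apply: (rlerZ hG); rewrite // oppr_ge0 ltW.
- by case=> /hs[? ?] /hu[? ?]; rewrite scalerDl; split; apply: (rjoinB_le hG).
Qed.

End Evaluation.
End RieszTerms.

Section TermsTopology.
Variables (R : realType) (X Y : topologicalType).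
Implicit Types (t : rterm R X Y).

Lemma rfun_continuous t : rterm_all (fun f g => continuous f /\ continuous g) t ->
  continuous (fun p : X * Y => rfun t p.1 p.2).
Proof.
elim: t => /= [_|f g [cf cg]|s hs u hu [/hs cs /hu cu]|a s hs /hs cs|s hs u hu [/hs cs /hu cu]].
- exact: cst_continuous.
- by move=> p; apply: continuousM; apply: continuous_comp;
    [exact: cvg_fst | exact: cf | exact: cvg_snd | exact: cg].
- by move=> p; exact: (continuousD (cs p) (cu p)).
- by move=> p; exact: (continuousM (@cst_continuous _ _ a p) (cs p)).
- exact: max_fun_continuous.
Qed.

Lemma gen_sum_in (Z : topologicalType) (S : set (Z -> R)) (w : (X -> R) -> (Y -> R) -> Z -> R) t :
  riesz_subspace_CX S -> rterm_all (fun f g => S (w f g)) t -> S (gen_sum w t).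
Proof.
move=> hS; elim: t => /= [_|//|s hs u hu [/hs ? /hu ?]|a s hs /hs //|s hs u hu [/hs ? /hu ?]].
- exact: cx0.
- exact: cxD.
- exact: cxD.
Qed.

Variables (E : set (X -> R)) (F : set (Y -> R)).

Lemma riesz_tensorP (G : lmodType R) (join : G -> G -> G)
    (phi : (X -> R) -> (Y -> R) -> G) z :
  riesz_tensor E F join phi z <-> exists2 t, rterm_in E F t & reval join phi t = z.
Proof.
split=> [tz|[t wt <-] V [V0 VD VZ VJ] sub].
  apply: (tz [set z | exists2 t, rterm_in E F t & reval join phi t = z]);
    last by move=> _ [f Ef [g Fg <-]]; exists (RGen f g).
  split; first by exists RZero.
  - by move=> _ _ [s ws <-] [u wu <-]; exists (RAdd s u).
  - by move=> a _ [s ws <-]; exists (RScale a s).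
  - by move=> _ _ [s ws <-] [u wu <-]; exists (RJoin s u).
elim: t wt => /= [//|f g [Ef Fg]|s hs u hu [/hs ? /hu ?]|a s hs /hs ?|s hs u hu [/hs ? /hu ?]].
- by apply: sub; exists f => //; exists g.
- exact: VD.
- exact: VZ.
- exact: VJ.
Qed.

Lemma reval_in_tensor (G : lmodType R) (join : G -> G -> G)
    (phi : (X -> R) -> (Y -> R) -> G) t :
  rterm_in E F t -> riesz_tensor E F join phi (reval join phi t).
Proof. by move=> wt; apply/riesz_tensorP; exists t. Qed.

Hypotheses (hE : riesz_subspace_CX E) (hF : riesz_subspace_CX F).

Lemma rfun_slice_in t x0 : rterm_in E F t -> F (rfun t x0).
Proof.
elim: t => /= [_|f g [_ Fg]|s hs u hu [/hs ? /hu ?]|a s hs /hs ?|s hs u hu [/hs ? /hu ?]].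
- exact: cx0.
- exact: cxZ.
- exact: cxD.
- exact: cxZ.
- exact: cx_max.
Qed.

Lemma ybound_in t : rterm_in E F t -> F (ybound t).
Proof. by move=> wt; apply: gen_sum_in hF (rterm_all_impl _ wt) => f g [_ /cx_norm]; apply. Qed.

Hypothesis hEc : contains_constants E.

Lemma xosc_in t x0 : rterm_in E F t -> E (xosc t x0).
Proof.
move=> wt; apply: gen_sum_in hE (rterm_all_impl _ wt) => f g [Ef _].
exact/(cx_norm hE)/(cxB hE Ef).
Qed.

End TermsTopology.

Section Bimorphism.
Variables (R : realType) (X Y : topologicalType) (E : set (X -> R)) (F : set (Y -> R)).
Hypotheses (hE : riesz_subspace_CX E) (hF : riesz_subspace_CX F).
Variables (G : lmodType R) (le : G -> G -> Prop) (join : G -> G -> G).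
Hypothesis hG : riesz_space le join.
Variable phi : (X -> R) -> (Y -> R) -> G.
Hypothesis hphi : riesz_bimorphism E F join phi.

Lemma phiDl g f1 f2 : F g -> E f1 -> E f2 ->
  phi (fun x => f1 x + f2 x) g = phi f1 g + phi f2 g.
Proof.
move=> Fg Ef1 Ef2; case: hphi => /(_ g Fg 1 1 f1 f2 Ef1 Ef2) + _; rewrite !scale1r => <-.
by congr phi; apply/funext => x; rewrite !mul1r.
Qed.

Lemma phiBl g f1 f2 : F g -> E f1 -> E f2 ->
  phi (fun x => f1 x - f2 x) g = phi f1 g - phi f2 g.
Proof.
move=> Fg Ef1 Ef2; case: hphi => /(_ g Fg 1 (-1) f1 f2 Ef1 Ef2) + _.
rewrite scale1r scaleN1r => <-.
by congr phi; apply/funext => x; rewrite mul1r mulN1r.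
Qed.

Lemma phiZl a g f : F g -> E f -> phi (fun x => a * f x) g = a *: phi f g.
Proof.
move=> Fg Ef; case: hphi => /(_ g Fg a 0 f f Ef Ef) + _; rewrite scale0r addr0 => <-.
by congr phi; apply/funext => x; rewrite mul0r addr0.
Qed.

Lemma phi0l g : F g -> phi (fun _ => 0) g = 0.
Proof.
move=> Fg; have := phiZl 0 Fg (cx0 hE); rewrite scale0r => <-.
by congr phi; apply/funext => x; rewrite mul0r.
Qed.

Lemma phiDr f g1 g2 : E f -> F g1 -> F g2 ->
  phi f (fun y => g1 y + g2 y) = phi f g1 + phi f g2.
Proof.
move=> Ef Fg1 Fg2; case: hphi => _ [/(_ f Ef 1 1 g1 g2 Fg1 Fg2) + _].
rewrite !scale1r => <-.
by congr phi; apply/funext => y; rewrite !mul1r.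
Qed.

Lemma phiBr f g1 g2 : E f -> F g1 -> F g2 ->
  phi f (fun y => g1 y - g2 y) = phi f g1 - phi f g2.
Proof.
move=> Ef Fg1 Fg2; case: hphi => _ [/(_ f Ef 1 (-1) g1 g2 Fg1 Fg2) + _].
rewrite scale1r scaleN1r => <-.
by congr phi; apply/funext => y; rewrite mul1r mulN1r.
Qed.

Lemma phiZr a f g : E f -> F g -> phi f (fun y => a * g y) = a *: phi f g.
Proof.
move=> Ef Fg; case: hphi => _ [/(_ f Ef a 0 g g Fg Fg) + _].
rewrite scale0r addr0 => <-.
by congr phi; apply/funext => y; rewrite mul0r addr0.
Qed.

Lemma phi0r f : E f -> phi f (fun _ => 0) = 0.
Proof.
move=> Ef; have := phiZr 0 Ef (cx0 hF); rewrite scale0r => <-.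
by congr phi; apply/funext => y; rewrite mul0r.
Qed.

Lemma phiJl g f1 f2 : F g -> (forall y, 0 <= g y) -> E f1 -> E f2 ->
  phi (fun x => Num.max (f1 x) (f2 x)) g = join (phi f1 g) (phi f2 g).
Proof. by move=> Fg g0 Ef1 Ef2; case: hphi => _ [_ [+ _]]; apply. Qed.

Lemma phiJr f g1 g2 : E f -> (forall x, 0 <= f x) -> F g1 -> F g2 ->
  phi f (fun y => Num.max (g1 y) (g2 y)) = join (phi f g1) (phi f g2).
Proof. by move=> Ef f0 Fg1 Fg2; case: hphi => _ [_ [_]]; apply. Qed.

Lemma phiCl c g : contains_constants E -> F g ->
  phi (fun _ => c) g = c *: phi (fun _ => 1) g.
Proof.
move=> hEc Fg; rewrite -phiZl //.
by congr phi; apply/funext => x; rewrite mulr1.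
Qed.

Lemma phi_ge0 f g : E f -> F g -> (forall x, 0 <= f x) -> (forall y, 0 <= g y) ->
  le 0 (phi f g).
Proof.
move=> Ef Fg f0 g0; rewrite -(phi0r Ef).
have -> : g = fun y => Num.max (g y) 0 by apply/funext => y; rewrite max_l.
by rewrite phiJr //; [apply: (rle_joinr hG) | exact: (cx0 hF)].
Qed.

(* [2 (phi rho gam - phi r g) = phi (rho - r) (gam + g) + phi (rho + r) (gam - g)] *)
Lemma phi_le_abs r g rho gam : E r -> F g -> E rho -> F gam ->
  (forall x, `|r x| <= rho x) -> (forall y, `|g y| <= gam y) ->
  le (phi r g) (phi rho gam).
Proof.
move=> Er Fg Erho Fgam r_le g_le.
have abs_le (h k : R) : `|h| <= k -> 0 <= k - h /\ 0 <= k + h.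
  by rewrite ler_norml => /andP[? ?]; split; lra.
have P1 : le 0 (phi (fun x => rho x - r x) (fun y => gam y + g y)).
  apply: phi_ge0 => [||x|y]; [exact: cxB|exact: cxD|by case: (abs_le _ _ (r_le x))|].
  by case: (abs_le _ _ (g_le y)).
have P2 : le 0 (phi (fun x => rho x + r x) (fun y => gam y - g y)).
  apply: phi_ge0 => [||x|y]; [exact: cxD|exact: cxB|by case: (abs_le _ _ (r_le x))|].
  by case: (abs_le _ _ (g_le y)).
have := rlerD hG P1 P2; rewrite addr0.
rewrite (phiBl (cxD hF Fgam Fg) Erho Er) (phiDr Erho Fgam Fg) (phiDr Er Fgam Fg).
rewrite (phiDl (cxB hF Fgam Fg) Erho Er) (phiBr Erho Fgam Fg) (phiBr Er Fgam Fg).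
set a := phi rho gam; set b := phi rho g; set c := phi r gam; set d := phi r g.
rewrite opprD [a + b + _]addrACA [a - b + _]addrACA [X in le _ X]addrACA.
rewrite [a - c + _]addrACA addNr addr0 [b - d + _]addrACA subrr add0r.
rewrite [X in le _ X]addrACA -mulr2n -scaler_nat.
have half : (0 : R) <= 2^-1 by rewrite invr_ge0 ler0n.
move=> /(rscaler_ge0 hG half); rewrite scalerA mulVf ?pnatr_eq0 // scale1r.
by move=> /(rsubr_ge0 hG).
Qed.

End Bimorphism.

Lemma bigmax_eq (R : realDomainType) (I : eqType) (k : I -> R) (a c : R) (s : seq I) :
  a <= c -> (forall i, k i <= c) -> has (fun i => k i == c) s ->
  \big[Num.max/a]_(i <- s) k i = c.
Proof.
move=> ac kc; elim: s => //= i s IH; rewrite big_cons.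
have le_c : \big[Num.max/a]_(j <- s) k j <= c.
  by elim/big_ind: _ => // x y; rewrite ge_max => -> ->.
by case/orP => [/eqP ki|/IH ->]; [rewrite ki max_l | rewrite max_r ?kc].
Qed.

Lemma compact_pointwise_cover (T : topologicalType) (U : T -> set T) :
  compact [set: T] -> (forall x, open (U x)) -> (forall x, U x x) ->
  exists s : seq T, forall x, exists2 x0, x0 \in s & U x0 x.
Proof.
move=> /compact_near_coveringP cT oU Ux.
pose B (s0 : seq T) := [set s : seq T | {subset s0 <= s}].
have FB : ProperFilter (filter_from setT B).
  apply: filter_from_proper; last by move=> s0 _; exists s0.
  apply: filter_from_filter; first by exists [::].
  move=> s1 s2 _ _; exists (s1 ++ s2) => // s sub.
  by split=> x x_s; apply: sub; rewrite mem_cat x_s ?orbT.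
have [s0 _ cov] : \forall s \near filter_from setT B,
    [set: T] `<=` [set x | exists2 x0, x0 \in s & U x0 x].
  apply: (cT _ _ _ FB) => z _; exists (U z, B [:: z]).
    by split=> /=; [apply: open_nbhs_nbhs; split | exists [:: z]].
  by case=> y s [/= Uy z_s]; exists z => //; apply: z_s; rewrite mem_seq1.
by exists s0 => x; apply: (cov s0 (fun _ => id) x I).
Qed.

Section ProductBump.
Variables (R : realType) (X Y : topologicalType) (E : set (X -> R)) (F : set (Y -> R)).
Hypotheses (hE : riesz_subspace_CX E) (hEc : contains_constants E) (hEd : sup_dense E)
  (hX : compact [set: X]) (hXs : hausdorff_space X).
Hypotheses (hF : riesz_subspace_CX F) (hFc : contains_constants F) (hFd : sup_dense F)
  (hY : compact [set: Y]) (hYs : hausdorff_space Y).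

Lemma product_bump (h : X * Y -> R) x0 y0 c : 0 <= c -> continuous h -> c < h (x0, y0) ->
  exists f g, [/\ E f /\ F g, (forall x, 0 <= f x) /\ (forall y, 0 <= g y),
                  f x0 != 0 /\ g y0 != 0
                & forall x y, 0 <= h (x, y) -> c * (f x * g y) <= h (x, y)].
Proof.
move=> c0 hc c_lt.
have : nbhs (h (x0, y0)) [set r | c < r] by apply: open_nbhs_nbhs; split; [exact: open_gt|].
move=> /(hc (x0, y0)) [[U V] /= [nU nV] UV_lt].
have [f [Ef f01 fx0 fU]] := cx_bump hE hEc hEd hX hXs nU.
have [g [Fg g01 gy0 gV]] := cx_bump hF hFc hFd hY hYs nV.
exists f, g; split => //.
  by split=> [x|y]; [case/andP: (f01 x) | case/andP: (g01 y)].
move=> x y h_ge0.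
have [Ux|/fU ->] := pselect (U x); last by rewrite mul0r mulr0.
have [Vy|/gV ->] := pselect (V y); last by rewrite mulr0 mulr0.
have /andP[f0 f1] := f01 x; have /andP[g0 g1] := g01 y.
apply: le_trans (ltW (UV_lt (x, y) (conj Ux Vy))).
by rewrite ler_piMr // mulr_ile1.
Qed.

End ProductBump.

Section Positivity.
Variables (R : realType) (X Y : topologicalType) (E : set (X -> R)) (F : set (Y -> R)).
Hypotheses (hE : riesz_subspace_CX E) (hEc : contains_constants E) (hF : riesz_subspace_CX F).
Variables (G : lmodType R) (le : G -> G -> Prop) (join : G -> G -> G).
Hypothesis hG : riesz_space le join.
Variable phi : (X -> R) -> (Y -> R) -> G.
Hypothesis hphi : riesz_bimorphism E F join phi.

Lemma reval_frozen t x0 : rterm_in E F t ->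
  reval join (fun f g => phi (fun _ => f x0) g) t = phi (fun _ => 1) (rfun t x0).
Proof.
have E1 := hEc 1; have one_ge0 (x : X) : 0 <= (fun=> 1 : R) x := ler01.
have Fslice s : rterm_in E F s -> F (rfun s x0) := rfun_slice_in hF x0.
elim: t => /= [_|f g [_ Fg]|s hs u hu [ws wu]|a s hs ws|s hs u hu [ws wu]].
- by rewrite (phi0r hF hphi).
- by rewrite (phiZr hphi) // (phiCl hphi).
- by rewrite hs // hu // -(phiDr hphi E1 (Fslice s ws) (Fslice u wu)).
- by rewrite hs // -(phiZr hphi _ E1 (Fslice s ws)).
- by rewrite hs // hu // -(phiJr hphi E1 one_ge0 (Fslice s ws) (Fslice u wu)).
Qed.

Lemma reval_ge_frozen t x0 rho : rterm_in E F t -> (forall y, 0 <= rfun t x0 y) ->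
  E rho -> (forall x, xosc t x0 x <= rho x) ->
  le (phi (fun x => - lip_const t * rho x) (ybound t)) (reval join phi t).
Proof.
move=> wt t0 Erho osc_le; set d := phi rho (ybound t).
have Fgam := ybound_in hF wt.
have d0 : le 0 d.
  apply: (phi_ge0 hF hG hphi) => // [x|y]; last exact: ybound_ge0.
  exact: le_trans (xosc_ge0 _ _ _) (osc_le x).
have near : rterm_all (fun f g => le (phi f g - phi (fun _ => f x0) g) d /\
                                  le (phi (fun _ => f x0) g - phi f g) d) t.
  have bounds := rterm_all_and (xosc_ge_gen t x0) (ybound_ge_gen t).
  apply: rterm_all_impl (rterm_all_and wt bounds) => f g [[Ef Fg] [osc_f bnd_g]].
  have Ec := hEc (f x0); rewrite -!(phiBl hphi) //.
  split; apply: (phi_le_abs hE hF hG hphi) => //.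
  - exact: (cxB hE Ef Ec).
  - by move=> x; apply: le_trans (osc_f x) (osc_le x).
  - exact: (cxB hE Ec Ef).
  - by move=> x; rewrite distrC; apply: le_trans (osc_f x) (osc_le x).
have [_] := reval_lipschitz hG d0 near; rewrite reval_frozen // => /(rlerBlDl hG).
have frozen_ge0 : le 0 (phi (fun _ => 1) (rfun t x0)).
  by apply: (phi_ge0 hF hG hphi (hEc 1) (rfun_slice_in hF x0 wt)) => // _; exact: ler01.
move=> /(rle_trans hG frozen_ge0) h; rewrite (phiZl hphi) // scaleNr.
by apply/(rsubr_ge0 hG); rewrite opprK.
Qed.

Lemma phi_bigmax_le (I : Type) (k : I -> X -> R) (i0 : I) (s : seq I) gam u :
  F gam -> (forall y, 0 <= gam y) -> (forall i, E (k i)) ->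
  (forall i, le (phi (k i) gam) u) ->
  le (phi (fun x => \big[Num.max/k i0 x]_(i <- s) k i x) gam) u.
Proof.
move=> Fgam gam0 Ek k_le; pose M s x := \big[Num.max/k i0 x]_(i <- s) k i x.
suff : E (M s) /\ le (phi (M s) gam) u by case.
elim: s => [|i s [EM M_le]].
  by have -> : M [::] = k i0 by apply/funext => x; rewrite /M big_nil.
have -> : M (i :: s) = fun x => Num.max (k i x) (M s x).
  by apply/funext => x; rewrite /M big_cons.
split; first exact: cx_max.
by rewrite (phiJl hphi) //; apply: (rjoin_le hG).
Qed.

Hypotheses (harch : forall x y : G, le 0 x -> (forall n : nat, le (n%:R *: x) y) -> x = 0)
  (hX : compact [set: X]).

(* Freezing [x] at the points [x0] of a finite cover of [X] by the sets
   [{xosc t x0 < e}] and joining the lower bounds of [reval_ge_frozen] gives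
   [- e K phi(1, ybound t) <= reval t]. *)
Lemma reval_ge0 t : rterm_in E F t -> (forall x y, 0 <= rfun t x y) -> le 0 (reval join phi t).
Proof.
move=> wt t_ge0; have [[x1 _]|X0] := pselect (exists x : X, True); last first.
  suff -> : reval join phi t = 0 by apply: (rlexx hG).
  rewrite -(reval0 hG t); apply: reval_ext; apply: rterm_all_impl wt => f g [_ Fg].
  have -> : f = (fun _ => 0) by apply/funext => x; case: X0; exists x.
  exact: (phi0l hE hphi).
set K := lip_const t; set gam := ybound t.
have Fgam : F gam := ybound_in hF wt.
have gam0 y : 0 <= gam y := ybound_ge0 t y.
have K0 : 0 <= K := lip_const_ge0 t.
have y0 : le 0 (K *: phi (fun _ => 1) gam).
  by apply: (rscaler_ge0 hG K0); apply: (phi_ge0 hF hG hphi (hEc 1) Fgam) => // _; exact: ler01.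
apply: (rarchimedean_ge0 hG harch y0) => e e0.
pose k x0 x := - K * Num.max (xosc t x0 x) e.
have [s cov] : exists s : seq X, forall x, exists2 x0, x0 \in s & xosc t x0 x < e.
  apply: (compact_pointwise_cover (U := fun x0 => [set x | xosc t x0 x < e])) => // [x0|x0].
    apply: (@open_comp _ _ _ [set r | r < e]); last exact: open_lt.
    by move=> x _; apply: (cx_cont hE (xosc_in hE hEc x0 wt)).
  by rewrite /= xosc_self.
have Erho x0 : E (fun x => Num.max (xosc t x0 x) e).
  exact: (cx_max hE (xosc_in hE hEc x0 wt) (hEc e)).
have Ek x0 : E (k x0) := cxZ hE _ (Erho x0).
have k_le x0 : le (phi (k x0) gam) (reval join phi t).
  by apply: (reval_ge_frozen wt (t_ge0 x0) (Erho x0)) => x; rewrite le_max lexx.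
have := phi_bigmax_le x1 s Fgam gam0 Ek k_le.
have -> : (fun x => \big[Num.max/k x1 x]_(x0 <- s) k x0 x) = fun _ => - K * e.
  apply/funext => x; have k_le_Ke x0 : k x0 x <= - K * e.
    by rewrite /k !mulNr lerN2 ler_wpM2l // le_max lexx orbT.
  apply: bigmax_eq => //; apply/hasP; have [x0 sx0 lt_e] := cov x.
  by exists x0 => //; rewrite /k max_r ?ltW.
by rewrite (phiCl hphi _ hEc) // mulNr scaleNr mulrC -scalerA.
Qed.

Hypotheses (hEd : sup_dense E) (hXs : hausdorff_space X).
Hypotheses (hFc : contains_constants F) (hFd : sup_dense F)
  (hY : compact [set: Y]) (hYs : hausdorff_space Y).
Hypothesis hinj : bi_injective E F phi.

(* If [rfun t] does not vanish, [|t|] dominates [c f(x) g(y)] for bumps [f], [g],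
   so that [0 <= c phi(f, g) <= reval |t| = 0] contradicts bi-injectivity. *)
Lemma reval_eq0 t : rterm_in E F t -> reval join phi t = 0 -> forall x y, rfun t x y = 0.
Proof.
move=> wt t0 x0 y0; apply: contrapT => /eqP nz.
pose s := RJoin t (RScale (-1) t).
have ws : rterm_in E F s by [].
have rs x y : rfun s x y = `|rfun t x y| by rewrite /= mulN1r maxrN.
have s0 : reval join phi s = 0 by rewrite /= t0 scaler0 (rjoinxx hG).
pose c := `|rfun t x0 y0| / 2.
have t_gt0 : 0 < `|rfun t x0 y0| by rewrite normr_gt0.
have c0 : 0 < c by rewrite /c; lra.
have cs : c < rfun s x0 y0 by rewrite rs /c; lra.
have cont_s := rfun_continuous (rterm_all_impl (fun f g '(conj Ef Fg) =>
  conj (cx_cont hE Ef) (cx_cont hF Fg)) ws).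
have [f [g [[Ef Fg] [f0 g0] [fx0 gy0] dom]]] :=
  product_bump hE hEc hEd hX hXs hF hFc hFd hY hYs (ltW c0) cont_s cs.
pose w := RAdd s (RScale (- c) (RGen f g)).
have w_ge0 x y : 0 <= rfun w x y.
  rewrite -[rfun w x y]/(rfun s x y + - c * (f x * g y)) mulNr subr_ge0.
  by apply: dom; rewrite rs.
have := reval_ge0 (t := w) (conj ws (conj Ef Fg)) w_ge0.
rewrite -[reval join phi w]/(reval join phi s + (- c) *: phi f g) s0 add0r => hw.
have : phi f g = 0.
  apply: (rle_anti hG) (phi_ge0 hF hG hphi Ef Fg f0 g0).
  have ci : 0 <= c^-1 by rewrite invr_ge0 ltW.
  have := rscaler_ge0 hG ci hw; rewrite scalerA mulrN mulVf ?gt_eqF // scaleN1r.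
  by move=> /(rlerN2 hG); rewrite opprK oppr0.
by move=> /(hinj Ef Fg) [] fg0; [move: fx0 | move: gy0]; rewrite fg0 /= eqxx.
Qed.

Lemma reval_eqP s t : rterm_in E F s -> rterm_in E F t ->
  reval join phi s = reval join phi t <-> forall x y, rfun s x y = rfun t x y.
Proof.
move=> ws wt; pose d := RAdd s (RScale (-1) t).
have wd : rterm_in E F d by [].
have ed : reval join phi d = reval join phi s - reval join phi t by rewrite /= scaleN1r.
have rd x y : rfun d x y = rfun s x y - rfun t x y by rewrite /= mulN1r.
split=> [st x y|st].
  by apply/eqP; rewrite -subr_eq0 -rd; apply/eqP/(reval_eq0 wd); rewrite ed st subrr.
apply/eqP; rewrite -subr_eq0 -ed; apply/eqP/(rle_anti hG).
  have nd_ge0 x y : 0 <= rfun (RScale (-1) d) x y.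
    by rewrite -[rfun (RScale _ _) x y]/(-1 * rfun d x y) rd st subrr mulr0.
  have := reval_ge0 (t := RScale (-1) d) wd nd_ge0.
  rewrite -[reval _ _ (RScale _ _)]/((-1) *: reval join phi d) scaleN1r.
  by move=> /(rlerN2 hG); rewrite opprK oppr0.
by apply: reval_ge0 => // x y; rewrite rd st subrr.
Qed.
End Positivity.

Section TensorIso.
Variables (R : realType) (X Y : topologicalType) (E : set (X -> R)) (F : set (Y -> R)).
Variables (G1 : lmodType R) (join1 : G1 -> G1 -> G1) (phi1 : (X -> R) -> (Y -> R) -> G1).
Variables (G2 : lmodType R) (join2 : G2 -> G2 -> G2) (phi2 : (X -> R) -> (Y -> R) -> G2).

Lemma riesz_hom_reval T t : riesz_hom_on join1 join2 (riesz_tensor E F join1 phi1) T ->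
  (forall f g, E f -> F g -> T (phi1 f g) = phi2 f g) -> rterm_in E F t ->
  T (reval join1 phi1 t) = reval join2 phi2 t.
Proof.
move=> [lin hom] agree.
have V s : rterm_in E F s -> riesz_tensor E F join1 phi1 (reval join1 phi1 s).
  exact: reval_in_tensor.
elim: t => /= [_|f g [Ef Fg]|s hs u hu [ws wu]|a s hs ws|s hs u hu [ws wu]].
- by have := lin 0 0 _ _ (V RZero I) (V RZero I); rewrite !scale0r !addr0.
- exact: agree.
- have := lin 1 1 _ _ (V s ws) (V u wu).
  by rewrite !scale1r => ->; rewrite hs // hu.
- have := lin a 0 _ _ (V s ws) (V s ws).
  by rewrite !scale0r !addr0 => ->; rewrite hs.
- by rewrite (hom _ _ (V s ws) (V u wu)) hs // hu.
Qed.

Definition tensor_map (z : G1) : G2 :=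
  if pselect (exists2 t, rterm_in E F t & reval join1 phi1 t = z) is left ex
  then reval join2 phi2 (s2val (cid2 ex)) else 0.

Hypothesis same_relations : forall s t, rterm_in E F s -> rterm_in E F t ->
  reval join1 phi1 s = reval join1 phi1 t <-> reval join2 phi2 s = reval join2 phi2 t.

Lemma tensor_map_reval t : rterm_in E F t -> tensor_map (reval join1 phi1 t) = reval join2 phi2 t.
Proof.
move=> wt; rewrite /tensor_map; case: pselect => [ex|[]]; last by exists t.
by case: (cid2 ex) => s /= ws /(same_relations ws wt).
Qed.

Lemma tensor_map_iso : riesz_iso_onto join1 join2
  (riesz_tensor E F join1 phi1) (riesz_tensor E F join2 phi2) tensor_map.
Proof.
split.
- split=> [a b x y /riesz_tensorP[s ws <-] /riesz_tensorP[u wu <-]|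
           x y /riesz_tensorP[s ws <-] /riesz_tensorP[u wu <-]].
    have wsu : rterm_in E F (RAdd (RScale a s) (RScale b u)) by [].
    by rewrite -[_ + _]/(reval join1 phi1 (RAdd (RScale a s) (RScale b u))) !tensor_map_reval.
  have wsu : rterm_in E F (RJoin s u) by [].
  by rewrite -[join1 _ _]/(reval join1 phi1 (RJoin s u)) !tensor_map_reval.
- by move=> _ /riesz_tensorP[t wt <-]; rewrite tensor_map_reval //; apply: reval_in_tensor.
- move=> x y /riesz_tensorP[s ws <-] /riesz_tensorP[u wu <-].
  by rewrite !tensor_map_reval // => /(same_relations ws wu).
- move=> _ /riesz_tensorP[t wt <-]; exists (reval join1 phi1 t); last exact: tensor_map_reval.
  exact: reval_in_tensor.
Qed.

End TensorIso.

Unset Implicit Arguments.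

Theorem corollary3p5 (R : realType) (X Y : topologicalType)
  (hX : compact [set: X]) (hXs : hausdorff_space X)
  (hY : compact [set: Y]) (hYs : hausdorff_space Y)
  (E : set (X -> R)) (F : set (Y -> R))
  (hE : riesz_subspace_CX E) (hEd : sup_dense E) (hEc : contains_constants E)
  (hF : riesz_subspace_CX F) (hFd : sup_dense F) (hFc : contains_constants F)
  (G1 : lmodType R) (le1 : G1 -> G1 -> Prop) (join1 : G1 -> G1 -> G1)
  (hG1 : archimedean_riesz_space le1 join1)
  (G2 : lmodType R) (le2 : G2 -> G2 -> Prop) (join2 : G2 -> G2 -> G2)
  (hG2 : archimedean_riesz_space le2 join2)
  (phi1 : (X -> R) -> (Y -> R) -> G1) (phi2 : (X -> R) -> (Y -> R) -> G2)
  (hphi1 : riesz_bimorphism E F join1 phi1) (hinj1 : bi_injective E F phi1)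
  (hphi2 : riesz_bimorphism E F join2 phi2) (hinj2 : bi_injective E F phi2) :
  exists T : G1 -> G2,
    [/\ riesz_iso_onto join1 join2 (riesz_tensor E F join1 phi1)
          (riesz_tensor E F join2 phi2) T,
        (forall f g, E f -> F g -> T (phi1 f g) = phi2 f g)
      & (forall T' : G1 -> G2,
          riesz_iso_onto join1 join2 (riesz_tensor E F join1 phi1)
            (riesz_tensor E F join2 phi2) T' ->
          (forall f g, E f -> F g -> T' (phi1 f g) = phi2 f g) ->
          forall x, riesz_tensor E F join1 phi1 x -> T' x = T x)].
Proof.
case: hG1 => hG1r harch1; case: hG2 => hG2r harch2.
have same s t : rterm_in E F s -> rterm_in E F t ->
    reval join1 phi1 s = reval join1 phi1 t <-> reval join2 phi2 s = reval join2 phi2 t.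
  move=> ws wt.
  rewrite (reval_eqP hE hEc hF hG1r hphi1 harch1 hX hEd hXs hFc hFd hY hYs hinj1 ws wt).
  by rewrite (reval_eqP hE hEc hF hG2r hphi2 harch2 hX hEd hXs hFc hFd hY hYs hinj2 ws wt).
exists (tensor_map E F join1 phi1 join2 phi2); split.
- exact: tensor_map_iso.
- by move=> f g Ef Fg; apply: (tensor_map_reval same (t := RGen f g)).
- move=> T' [hom _ _ _] agree _ /riesz_tensorP[t wt <-].
  by rewrite (tensor_map_reval same) // (riesz_hom_reval hom agree).
Qed.
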